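(* For any $\beta_0\in(0,\pi)$ there exists a finite point set $P$ in the plane such that $\max_{\beta\in(0,\pi)}\operatorname{area}(\mathcal{O}_\beta\mathcal{H}(P))\neq\operatorname{area}(\mathcal{O}_{\beta_0}\mathcal{H}(P))$.
   Context: For $\beta\in(0,\pi)$, $\mathcal{O}_\beta$ is the pair of lines through the origin with slopes $0$ and $\tan\beta$. Given an apex $a$, every point is uniquely $a+s(1,0)+t(\cos\beta,\sin\beta)$; an $\mathcal{O}_\beta$-quadrant with apex $a$ is one of the four open sets of such points with $s>0,t>0$; $s<0,t>0$; $s>0,t<0$; or $s<0,t<0$. A quadrant is $P$-free if it contains no point of $P$, and the $\mathcal{O}_\beta$-hull $\mathcal{O}_\beta\mathcal{H}(P)$ is the plane minus the union of all $P$-free $\mathcal{O}_\beta$-quadrants. $\operatorname{area}$ denotes Lebesgue measure. *)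

From HB Require Import structures.
From mathcomp Require Import all_boot all_order all_algebra.
From mathcomp Require Import all_classical all_reals all_analysis.
Set Implicit Arguments. Unset Strict Implicit. Unset Printing Implicit Defensive.
Import Order.TTheory GRing.Theory Num.Theory.
Local Open Scope classical_set_scope.
Local Open Scope ring_scope.

(* Oblique coordinates (s, t) of p relative to apex a:
   p = a + s (1,0) + t (cos b, sin b), valid since sin b <> 0 for b in (0,pi). *)
Definition obl_t (R : realType) (b : R) (a p : R * R) : R :=
  (p.2 - a.2) / sin b.
Definition obl_s (R : realType) (b : R) (a p : R * R) : R :=
  (p.1 - a.1) - obl_t b a p * cos b.

Definition Oquadrant (R : realType) (b : R) (a : R * R) (e1 e2 : bool)
  : set (R * R) :=
  [set p | (if e1 then 0 < obl_s b a p else obl_s b a p < 0) /\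
           (if e2 then 0 < obl_t b a p else obl_t b a p < 0)].

Definition Pfree (R : realType) (P : seq (R * R)) (Q : set (R * R)) : Prop :=
  forall x, x \in P -> ~ Q x.

Definition Ohull (R : realType) (b : R) (P : seq (R * R)) : set (R * R) :=
  [set p | ~ exists a e1 e2,
      Pfree P (Oquadrant b a e1 e2) /\ Oquadrant b a e1 e2 p].

Definition area (R : realType) (A : set (R * R)) : \bar R :=
  ((@lebesgue_measure R) \x (@lebesgue_measure R))%E A.

From HB Require Import structures.
From mathcomp Require Import all_boot all_order all_algebra.
From mathcomp Require Import all_classical all_reals all_analysis.
From mathcomp Require Import ring lra.
Import Order.TTheory GRing.Theory Num.Theory.
Local Open Scope classical_set_scope.
Local Open Scope ring_scope.

Set Implicit Arguments.
Unset Strict Implicit.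
Unset Printing Implicit Defensive.

(* With b := b0 / 2, oblique coordinates of angles b and b0 differ by a shear
   (s, t) |-> (s + c t, k t) with c, k > 0.  Four points forming a pinwheel
   around the origin in b-coordinates meet every O_b-quadrant whose apex is
   near the origin, so the O_b-hull contains a rectangle.  After the shear the
   same points form an increasing chain, and every point off the horizontal
   lines through a chain lies in a free quadrant, so the O_b0-hull is null. *)

Section OrthoHull.
Variable R : realType.
Implicit Types (Q : seq (R * R)) (a z : R * R).

Definition quadrant (e1 e2 : bool) a : set (R * R) :=
  [set z | (if e1 then a.1 < z.1 else z.1 < a.1) /\
           (if e2 then a.2 < z.2 else z.2 < a.2)].

Definition ortho_hull Q : set (R * R) :=
  [set z | ~ exists a e1 e2, Pfree Q (quadrant e1 e2 a) /\ quadrant e1 e2 a z].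

Definition increasing_chain Q := {in Q &, forall p q, p.2 < q.2 -> p.1 < q.1}.

Lemma ortho_hull_chain Q :
  increasing_chain Q -> ortho_hull Q `<=` [set z | z.2 \in map snd Q].
Proof.
move=> chainQ [x y] hull_z /=; apply: contraT => y_notin; exfalso; apply: hull_z.
have y_neq q : q \in Q -> q.2 != y.
  by move=> qQ; apply: contraNneq y_notin => <-; exact: map_f.
pose tl := \big[Num.max/y - 1]_(q <- Q | q.2 < y) q.2.
pose th := \big[Num.min/y + 1]_(q <- Q | y < q.2) q.2.
have tl_lt : tl < y by apply: bigmax_lt => //; lra.
have th_gt : y < th by apply: lt_bigmin => //; lra.
(* Either a point below z lies to its right, and then so do all points above z
   (chain): take a north-west quadrant; otherwise take a south-east one. *)
have [/hasP[q0 q0Q /andP[q0_lo x_le]] | /hasPn x_right] :=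
  boolP (has (fun q => (q.2 < y) && (x <= q.1)) Q).
- pose sh := \big[Num.min/x + 1]_(q <- Q | y < q.2) q.1.
  have sh_gt : x < sh.
    rewrite /sh big_seq_cond; apply: lt_bigmin => [|q /andP[qQ yq]]; first lra.
    by apply: le_lt_trans x_le _; apply: chainQ => //; exact: lt_trans q0_lo yq.
  exists ((x + sh) / 2, (y + tl) / 2), false, true.
  split=> [q qQ [/= q1 q2]|]; last by split=> /=; lra.
  have [q_lo|q_hi|/eqP] := ltgtP q.2 y; last by rewrite (negPf (y_neq q qQ)).
    by have := le_bigmax_seq (y - 1) _ (fun q => q.2 < y) snd qQ q_lo; rewrite -/tl; lra.
  by have := ge_bigmin_seq (x + 1) _ (fun q => y < q.2) fst qQ q_hi; rewrite -/sh; lra.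
- pose sl := \big[Num.max/x - 1]_(q <- Q | q.2 < y) q.1.
  have sl_lt : sl < x.
    rewrite /sl big_seq_cond; apply: bigmax_lt => [|q /andP[qQ q_lo]]; first lra.
    by have := x_right q qQ; rewrite q_lo /= -ltNge.
  exists ((x + sl) / 2, (y + th) / 2), true, false.
  split=> [q qQ [/= q1 q2]|]; last by split=> /=; lra.
  have [q_lo|q_hi|/eqP] := ltgtP q.2 y; last by rewrite (negPf (y_neq q qQ)).
    by have := le_bigmax_seq (x - 1) _ (fun q => q.2 < y) fst qQ q_lo; rewrite -/sl; lra.
  by have := ge_bigmin_seq (y + 1) _ (fun q => y < q.2) snd qQ q_hi; rewrite -/th; lra.
Qed.

Definition pinwheel (l : R) : seq (R * R) :=
  [:: (-1, - (2 * l)); (2, - l); (-2, l); (1, 2 * l)].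

Lemma pinwheel_box l : `]-1, 1[ `*` `]- l, l[ `<=` ortho_hull (pinwheel l).
Proof.
move=> [x y] [/=]; rewrite !in_itv /= => /andP[x_gt x_lt] /andP[y_gt y_lt].
move=> [a [e1 [e2 [free]]]].
case: e1 e2 free => [] [] free [/= a1 a2].
- by apply: (free (1, 2 * l)); rewrite ?inE ?eqxx ?orbT //; split=> /=; lra.
- by apply: (free (2, - l)); rewrite ?inE ?eqxx ?orbT //; split=> /=; lra.
- by apply: (free (-2, l)); rewrite ?inE ?eqxx ?orbT //; split=> /=; lra.
- by apply: (free (-1, - (2 * l))); rewrite ?inE ?eqxx ?orbT //; split=> /=; lra.
Qed.

Lemma pinwheel_shear_chain c k l : 0 < k -> 0 < l -> 2 < c * l ->
  increasing_chain [seq (z.1 + c * z.2, k * z.2) | z <- pinwheel l].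
Proof.
move=> k_gt0 l_gt0 cl_gt2 p q; rewrite !inE.
by move=> /or4P[]/eqP-> /or4P[]/eqP->; rewrite /= ltr_pM2l //; lra.
Qed.

End OrthoHull.

Section ObliqueCoordinates.
Variable R : realType.
Implicit Types (b : R) (P : seq (R * R)) (p z : R * R).

Definition obl_coord b p : R * R := (p.1 - p.2 * cos b / sin b, p.2 / sin b).

Definition obl_point b z : R * R := (z.1 + z.2 * cos b, z.2 * sin b).

Lemma obl_coordK b : sin b != 0 -> cancel (obl_point b) (obl_coord b).
Proof. by move=> sb [s t]; rewrite /obl_coord /obl_point /=; congr pair; field. Qed.

Lemma OquadrantE b a e1 e2 :
  Oquadrant b a e1 e2 = obl_coord b @^-1` quadrant e1 e2 (obl_coord b a).
Proof.
have tE p : obl_t b a p = (obl_coord b p).2 - (obl_coord b a).2.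
  by rewrite /obl_t /= mulrBl.
have sE p : obl_s b a p = (obl_coord b p).1 - (obl_coord b a).1.
  by rewrite /obl_s tE /=; ring.
apply/seteqP; split=> p; rewrite /Oquadrant /quadrant /= sE tE;
  by case: e1; case: e2; rewrite ?subr_gt0 ?subr_lt0.
Qed.

Lemma Ohull_obl_coord b P : sin b != 0 ->
  Ohull b P = obl_coord b @^-1` ortho_hull (map (obl_coord b) P).
Proof.
move=> sb; apply/seteqP; split=> p hull_p [a [e1 [e2 [free a_p]]]]; apply: hull_p.
- exists (obl_point b a), e1, e2; rewrite OquadrantE obl_coordK //.
  by split=> // q qP; apply: free; exact: map_f.
- exists (obl_coord b a), e1, e2; rewrite OquadrantE in free a_p.
  by split=> // _ /mapP[q qP ->]; exact: free.
Qed.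

Lemma obl_coord_shear b b' p : sin b != 0 -> sin b' != 0 ->
  obl_coord b' p = ((obl_coord b p).1 + sin (b' - b) / sin b' * (obl_coord b p).2,
                    sin b / sin b' * (obl_coord b p).2).
Proof.
by move=> sb sb'; rewrite /obl_coord sinB /=; congr pair; field; rewrite sb sb'.
Qed.

Lemma Ohull_chain b P : sin b != 0 -> increasing_chain (map (obl_coord b) P) ->
  Ohull b P `<=` [set p | p.2 \in map snd P].
Proof.
move=> sb chainP p; rewrite Ohull_obl_coord // => /(ortho_hull_chain chainP).
rewrite /= -map_comp => /mapP[q qP /(divIf sb) ->]; exact: map_f.
Qed.

Lemma obl_coord_rect b l : 0 < sin b -> 1 / 2 <= l ->
  `]-(1 / 4), 1 / 4[ `*` `]-(sin b / 2), sin b / 2[ `<=`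
  obl_coord b @^-1` (`]-1, 1[ `*` `]- l, l[).
Proof.
move=> sb_gt0 l_ge [x y] [/=]; rewrite !in_itv /= => /andP[x_gt x_lt] /andP[y_gt y_lt].
have t_gt : - (1 / 2) < y / sin b by rewrite ltr_pdivlMr //; lra.
have t_lt : y / sin b < 1 / 2 by rewrite ltr_pdivrMr //; lra.
have := cos_geN1 b; have := cos_le1 b => cos_le cos_ge.
have -> : y * cos b / sin b = y / sin b * cos b by rewrite mulrAC.
set t := y / sin b in t_gt t_lt *.
split; apply/andP; split; nra.
Qed.

End ObliqueCoordinates.

Section Area.
Variable R : realType.
Implicit Types (A B : set (R * R)).

Lemma le_lebesgue_measure (X Y : set R) : X `<=` Y ->
  (lebesgue_measure X <= lebesgue_measure Y)%E.
Proof.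
move=> XY; rewrite /lebesgue_measure /lebesgue_stieltjes_measure /measure_extension.
exact: le_mu_ext.
Qed.

Lemma ge0_le_integralT d (T : measurableType d) (mu : {measure set T -> \bar R})
    (f g : T -> \bar R) : (forall x, 0 <= f x)%E -> (forall x, f x <= g x)%E ->
  (\int[mu]_x f x <= \int[mu]_x g x)%E.
Proof.
move=> f0 fg; have g0 x : (0 <= g x)%E by exact: le_trans (fg x).
rewrite !ge0_integralTE //; apply: le_ereal_sup => _ [h hf <-].
by exists h => //= x; exact: le_trans (hf x) (fg x).
Qed.

Lemma area_le A B : A `<=` B -> (area A <= area B)%E.
Proof.
move=> AB; apply: ge0_le_integralT => x; first exact: measure_ge0.
by apply: le_lebesgue_measure => y /set_mem /AB; exact: mem_set.
Qed.

Lemma area_horizontal_lines (s : seq R) : area [set p | p.2 \in s] = 0%E.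
Proof.
apply: integral0_eq => x _ /=; rewrite (_ : xsection _ x = [set` s]).
  exact/countable_lebesgue_measure0/finite_set_countable/finite_seq.
by apply/seteqP; split=> y; rewrite /xsection /= inE.
Qed.

Lemma area_rect_gt0 (x1 x2 y1 y2 : R) : x1 < x2 -> y1 < y2 ->
  (0 < area (`]x1, x2[ `*` `]y1, y2[))%E.
Proof.
move=> x12 y12; rewrite /area product_measure1E; try exact: measurable_itv.
change (0 < lebesgue_measure `]x1, x2[ * lebesgue_measure `]y1, y2[)%E.
rewrite !lebesgue_measure_itv /= !lte_fin x12 y12 -EFinM lte_fin.
by apply: mulr_gt0; rewrite subr_gt0.
Qed.

End Area.

Theorem lemma4 (R : realType) (b0 : R) :
  0 < b0 < pi ->
  exists P : seq (R * R),
    ereal_sup [set area (Ohull b P) | b in `]0, pi[ ] <> area (Ohull b0 P).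
Proof.
move=> /andP[b0_gt0 b0_ltpi].
pose b := b0 / 2.
have b_in : 0 < b < pi by apply/andP; split; rewrite /b; lra.
have sb_gt0 : 0 < sin b by exact: sin_gt0_pi.
have sb0_gt0 : 0 < sin b0 by apply: sin_gt0_pi; rewrite b0_gt0.
have [sb sb0] := (lt0r_neq0 sb_gt0, lt0r_neq0 sb0_gt0).
pose c := sin (b0 - b) / sin b0.
have c_gt0 : 0 < c by rewrite divr_gt0 // sin_gt0_pi // /b; apply/andP; split; lra.
pose l := 1 + 3 / c.
have l_ge1 : 1 <= l by rewrite /l lerDl divr_ge0 // ltW.
have cl : c * l = c + 3 by rewrite /l mulrDr mulr1 mulrCA divff ?mulr1 // lt0r_neq0.
pose P := map (obl_point b) (pinwheel l).
exists P.
have null_b0 : area (Ohull b0 P) = 0%E.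
  apply/le_anti; rewrite measure_ge0 andbT -(area_horizontal_lines (map snd P)).
  apply/area_le/Ohull_chain => //.
  have -> : map (obl_coord b0) P =
      [seq (z.1 + c * z.2, sin b / sin b0 * z.2) | z <- pinwheel l].
    rewrite -map_comp; apply: eq_map => z /=.
    by rewrite (obl_coord_shear _ sb sb0) obl_coordK.
  by apply: pinwheel_shear_chain; rewrite ?divr_gt0 //; lra.
have pos_b : (0 < area (Ohull b P))%E.
  have x_rng : -(1 / 4) < 1 / 4 :> R by lra.
  have y_rng : -(sin b / 2) < sin b / 2 by lra.
  apply: lt_le_trans (area_rect_gt0 x_rng y_rng) (area_le _) => p.
  have l_half : 1 / 2 <= l by lra.
  move=> /(obl_coord_rect sb_gt0 l_half).
  rewrite Ohull_obl_coord // /P -map_comp (eq_map (obl_coordK sb)) map_id.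
  exact: pinwheel_box.
move=> sup_eq; have : (area (Ohull b P) <= area (Ohull b0 P))%E.
  by rewrite -sup_eq; apply: ereal_sup_ubound; exists b => //; rewrite /= in_itv.
by rewrite null_b0 leNgt pos_b.
Qed.
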